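(* Let $(x_n)_{n\ge0}$ be an infinite path in $\Gamma$ with $\ell(x_n)=n$, let $z$ be nonreal, and let $v_z,u_z:\Gamma\to\mathbb C$ satisfy $v_z(x_0)=1$, $v_z(x_1)=(z-\beta_{x_0})/\lambda_{x_0}$, $u_z(x_0)=0$, $u_z(x_1)=1/\lambda_{x_0}$, and $(Jv_z)(x)=zv_z(x)$, $(Ju_z)(x)=zu_z(x)$ for all $x\in\Gamma\setminus\{x_0\}$. Then for every $n\ge1$ and every $x\in\Gamma_n$, $v_z(x_n)u_z(x)=u_z(x_n)v_z(x)$.
   Context: Let $\Gamma$ be an infinite connected tree whose vertices are arranged in levels $\ell(x)\in\{0,1,2,\dots\}$: every vertex $x$ is adjacent to exactly one vertex $x'$ with $\ell(x')=\ell(x)+1$; for $\ell(x)\ge 1$ the set $N_x=\{y:\ y'=x\}$ of neighbours of $x$ on level $\ell(x)-1$ is finite and nonempty; $N_x=\emptyset$ if $\ell(x)=0$; there are no other edges. Fix $\lambda_x>0$, $\beta_x\in\mathbb R$. The Jacobi matrix $J$ acts on functions $v:\Gamma\to\mathbb C$ by $(Jv)(x)=\lambda_x v(x')+\beta_x v(x)+\sum_{y\in N_x}\lambda_y v(y)$. Given the path $(x_n)$, $\Gamma_n$ denotes the connected component containing $x_n$ of the graph obtained from $\Gamma$ by deleting all edges $\{x_n,x_{n+1}\}$, $n\ge0$ (no vertices are deleted); $\Gamma_n$ is finite and $x_n$ is its only vertex on level $n$. *)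

(* The scalar field is an arbitrary numClosedFieldType C
   (e.g. the complex numbers); the tree is given by a vertex type V, a level
   function, a parent map  x |-> x'  and, for each x, a duplicate-free list
   enumerating the finite set N_x = {y | y' = x}. *)
From Stdlib Require Import List Relations.
From HB Require Import structures.
From mathcomp Require Import all_boot all_order all_algebra.
Set Implicit Arguments. Unset Strict Implicit. Unset Printing Implicit Defensive.
Import Order.TTheory GRing.Theory Num.Theory.
Local Open Scope ring_scope.

Definition adj (V : Type) (par : V -> V) (a b : V) : Prop := par a = b \/ par b = a.

Definition Jac (C : numClosedFieldType) (V : Type) (par : V -> V)
  (children : V -> seq V) (lam beta : V -> C) (w : V -> C) (x : V) : C :=
  lam x * w (par x) + beta x * w x + \sum_(y <- children x) lam y * w y.

Definition cut_edge (V : Type) (par : V -> V) (xs : nat -> V) (a b : V) : Prop :=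
  adj par a b /\
  ~ (exists k : nat, (a = xs k /\ b = xs k.+1) \/ (a = xs k.+1 /\ b = xs k)).

Definition in_Gamma_n (V : Type) (par : V -> V) (xs : nat -> V) (n : nat) (x : V)
  : Prop := clos_refl_trans V (cut_edge par xs) (xs n) x.

(* Put w := v(x_n) u - u(x_n) v; it solves Jw = zw off x_0 and vanishes at x_n.
   Every x in Gamma_n other than x_n lies in the subtree T below a child y of
   x_n with y <> x_(n-1); T is finite and avoids x_0.  Summing conj(w) (Jw - zw)
   over T, all terms except one are real, and Green's identity reads
     Im z * sum_(t in T) |w t|^2 = Im (lam y * conj (w y) * w x_n) = 0,
   so w vanishes on T because z is not real.  The initial values of u and v
   play no role. *)
From Stdlib Require Import List Relations Classical.
From HB Require Import structures.
From mathcomp Require Import all_boot all_order all_algebra.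
From mathcomp Require Import ring zify.
Set Implicit Arguments. Unset Strict Implicit. Unset Printing Implicit Defensive.
Import Order.TTheory GRing.Theory Num.Theory.
Local Open Scope ring_scope.

Lemma addC_conjC_real (C : numClosedFieldType) (a : C) : a + a^* \is Num.real.
Proof. by rewrite CrealE rmorphD /= conjCK addrC. Qed.

Lemma ler_sum_In (R : numDomainType) (T : Type) (s : seq T) (f : T -> R) c :
  (forall x, 0 <= f x) -> In c s -> f c <= \sum_(x <- s) f x.
Proof.
move=> f_ge0; elim: s => [|a s IH] //= [->|c_s]; rewrite big_cons.
  by rewrite lerDl sumr_ge0.
by rewrite (le_trans (IH c_s)) // lerDr.
Qed.

Lemma real_sum_In (R : numDomainType) (T : Type) (s : seq T) (f : T -> R) :
  (forall x, In x s -> f x \is Num.real) -> \sum_(x <- s) f x \is Num.real.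
Proof.
elim: s => [|a s IH] f_real; first by rewrite big_nil rpred0.
by rewrite big_cons rpredD ?f_real ?IH //= => [|x x_s]; [left | apply: f_real; right].
Qed.

Lemma Jac_lincomb (C : numClosedFieldType) (V : Type) (par : V -> V)
    (children : V -> seq V) (lam beta : V -> C) (a b : C) (f g : V -> C) x :
  Jac par children lam beta (fun t => a * f t - b * g t) x
  = a * Jac par children lam beta f x - b * Jac par children lam beta g x.
Proof.
rewrite /Jac; set Sf := (\sum_(_ <- _) _ * f _); set Sg := (\sum_(_ <- _) _ * g _).
have -> : \sum_(y <- children x) lam y * (a * f y - b * g y) = a * Sf - b * Sg.
  by rewrite /Sf /Sg !mulr_sumr -sumrB; apply: eq_bigr => y _; ring.
ring.
Qed.

Section SubtreeEnergy.

Variables (C : numClosedFieldType) (V : Type).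
Variables (lev : V -> nat) (par : V -> V) (children : V -> seq V).
Hypothesis lev_par : forall x, lev (par x) = (lev x).+1.
Hypothesis In_children : forall x y, In y (children x) <-> par y = x.

(* With fuel [k >= lev y] this is the sum of |w|^2 over the whole subtree below
   [y], since vertices of level 0 have no children. *)
Fixpoint energy (w : V -> C) (k : nat) (y : V) : C :=
  w y * (w y)^* +
  if k is k'.+1 then \sum_(c <- children y) energy w k' c else 0.

Lemma energy_ge0 w k y : 0 <= energy w k y.
Proof.
elim: k y => [|k IH] y /=; first by rewrite addr0 mul_conjC_ge0.
by rewrite addr_ge0 ?mul_conjC_ge0 ?sumr_ge0.
Qed.

Lemma lev_child x c : In c (children x) -> lev x = (lev c).+1.
Proof. by move/In_children <-. Qed.

Lemma lev_iter m d : lev (iter m par d) = (lev d + m)%N.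
Proof. by elim: m => [|m IH] /=; rewrite ?addn0 // lev_par IH addnS. Qed.

Lemma energy_ge_descendant w k y d m :
  (lev y <= k)%N -> iter m par d = y -> w d * (w d)^* <= energy w k y.
Proof.
elim: k y m => [|k IH] y [|m] lev_y d_y /=.
- by rewrite -d_y addr0.
- by move: lev_y; rewrite -d_y lev_par lev_iter.
- by rewrite -d_y lerDl sumr_ge0 // => c _; apply: energy_ge0.
- have y_child : In (iter m par d) (children y) by apply/In_children.
  apply: le_trans (IH _ m _ erefl) _; first by move: lev_y; rewrite (lev_child y_child).
  rewrite -[leLHS]add0r lerD ?mul_conjC_ge0 //.
  by apply: ler_sum_In y_child => c; apply: energy_ge0.
Qed.

Variables (lam beta : V -> C) (x0 : V) (z : C) (w : V -> C).
Hypothesis lam_gt0 : forall x, 0 < lam x.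
Hypothesis beta_real : forall x, beta x \is Num.real.
Hypothesis Jw : forall d, d <> x0 -> Jac par children lam beta w d = z * w d.

Definition avoids_x0 (y : V) : Prop := forall d m, iter m par d = y -> d <> x0.

Lemma avoids_x0_child y c : avoids_x0 y -> In c (children y) -> avoids_x0 c.
Proof.
by move=> y_avoid /In_children c_y d m d_c; apply: (y_avoid d m.+1); rewrite /= d_c.
Qed.

Lemma energy_Green k y : (lev y <= k)%N -> avoids_x0 y ->
  z * energy w k y - lam y * (w y)^* * w (par y) \is Num.real.
Proof.
elim: k y => [|k IH] y lev_y y_avoid /=.
  have no_child : children y = [::].
    case E: (children y) => [|c s] //.
    by move: lev_y; rewrite (@lev_child y c) ?E //; left.
  have := Jw (y_avoid y 0%N erefl); rewrite /Jac no_child big_nil addr0 => Jwy.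
  have -> : z * (w y * (w y)^* + 0) - lam y * (w y)^* * w (par y)
            = beta y * (w y * (w y)^*) by rewrite addr0 mulrA -Jwy; ring.
  by rewrite rpredM ?beta_real ?ger0_real ?mul_conjC_ge0.
have := Jw (y_avoid y 0%N erefl); rewrite /Jac.
set S := \sum_(_ <- _) _ => Jwy.
pose T c := z * energy w k c - lam c * (w c)^* * w y
            + lam c * ((w c)^* * w y + ((w c)^* * w y)^*).
have sum_T : \sum_(c <- children y) T c
             = z * \sum_(c <- children y) energy w k c + S * (w y)^*.
  rewrite /S mulr_sumr mulr_suml -big_split /=; apply: eq_bigr => c _.
  by rewrite /T rmorphM /= conjCK; ring.
have -> : z * (w y * (w y)^* + \sum_(c <- children y) energy w k c)
            - lam y * (w y)^* * w (par y)
          = beta y * (w y * (w y)^*) + \sum_(c <- children y) T c.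
  rewrite sum_T; have -> : S = z * w y - lam y * w (par y) - beta y * w y.
    by rewrite -Jwy; ring.
  ring.
rewrite rpredD ?(rpredM (beta_real y)) ?(ger0_real (mul_conjC_ge0 _)) //.
apply: real_sum_In => c c_y.
rewrite rpredD ?(rpredM (gtr0_real (lam_gt0 c))) ?addC_conjC_real //.
rewrite -((In_children _ _).1 c_y); apply: IH; last exact: avoids_x0_child c_y.
by rewrite -ltnS -(lev_child c_y).
Qed.

Lemma subtree_vanish y : z \isn't Num.real -> avoids_x0 y -> w (par y) = 0 ->
  forall d m, iter m par d = y -> w d = 0.
Proof.
move=> z_nreal y_avoid wpy0 d m d_y.
have := energy_Green (leqnn (lev y)) y_avoid; rewrite wpy0 mulr0 subr0 => zE_real.
have E0 : energy w (lev y) y = 0.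
  apply/eqP; apply: contraNT z_nreal => E_neq0.
  by rewrite -(mulfK E_neq0 z) rpredM // rpredV ger0_real // energy_ge0.
have := energy_ge_descendant w (leqnn (lev y)) d_y; rewrite E0 => wd_le0.
by apply/eqP; rewrite -mul_conjC_eq0 eq_le wd_le0 mul_conjC_ge0.
Qed.

End SubtreeEnergy.

Section LeveledPath.

Variables (V : Type) (lev : V -> nat) (par : V -> V) (xs : nat -> V).
Hypothesis lev_par : forall x, lev (par x) = (lev x).+1.
Hypothesis lev_xs : forall n, lev (xs n) = n.
Hypothesis adj_xs : forall n, adj par (xs n) (xs n.+1).

Lemma par_xs k : par (xs k) = xs k.+1.
Proof.
case: (adj_xs k) => // par_xsS.
by have := f_equal lev par_xsS; rewrite lev_par !lev_xs; lia.
Qed.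

Lemma iter_par_xs0 m : iter m par (xs 0%N) = xs m.
Proof. by elim: m => //= m ->; apply: par_xs. Qed.

(* Walking inside Gamma_n from x_n one can only go down, and never to x_(n-1). *)
Lemma in_Gamma_nP n : (1 <= n)%N -> forall x, in_Gamma_n par xs n x ->
  x = xs n \/ exists y m, [/\ par y = xs n, y <> xs n.-1 & iter m par x = y].
Proof.
move=> n_ge1 x x_Gn; have {x_Gn} := clos_rt_rtn1 _ _ _ _ x_Gn.
elim=> [|a b [adj_ab not_path] _ IH]; first by left.
case: IH adj_ab not_path => [->|[y [m [y_child y_ne d_y]]]] [] b_def not_path.
- by case: not_path; exists n; left; rewrite -b_def par_xs.
- have [b_prev|b_ne] := classic (b = xs n.-1).
    by case: not_path; exists n.-1; right; rewrite prednK.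
  by right; exists b, 0%N.
- case: m d_y => [|m] d_y; first by left; rewrite -b_def -y_child -d_y.
  by right; exists y, m; rewrite -b_def -iterSr.
- by right; exists y, m.+1; rewrite iterSr b_def.
Qed.

End LeveledPath.

Theorem lemma7 (C : numClosedFieldType) (V : Type)
  (lev : V -> nat) (par : V -> V) (children : V -> seq V) (lam beta : V -> C)
  (* tree structure *)
  (Hlev : forall x, lev (par x) = (lev x).+1)
  (Hch_nodup : forall x, NoDup (children x))
  (Hch : forall x y, In y (children x) <-> par y = x)
  (Hch_ne : forall x, (1 <= lev x)%N -> exists y, par y = x)
  (Hconn : forall x y : V, clos_refl_trans V (adj par) x y)
  (* Jacobi coefficients *)
  (Hlam : forall x, 0 < lam x)
  (Hbeta : forall x, beta x \is Num.real)
  (* the path *)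
  (xs : nat -> V)
  (Hxs_lev : forall n, lev (xs n) = n)
  (Hxs_adj : forall n, adj par (xs n) (xs n.+1))
  (* spectral parameter and solutions *)
  (z : C) (Hz : z \isn't Num.real)
  (v u : V -> C)
  (Hv0 : v (xs 0%N) = 1)
  (Hv1 : v (xs 1%N) = (z - beta (xs 0%N)) / lam (xs 0%N))
  (Hu0 : u (xs 0%N) = 0)
  (Hu1 : u (xs 1%N) = 1 / lam (xs 0%N))
  (Hv : forall x, x <> xs 0%N -> Jac par children lam beta v x = z * v x)
  (Hu : forall x, x <> xs 0%N -> Jac par children lam beta u x = z * u x) :
  forall n : nat, (1 <= n)%N -> forall x : V, in_Gamma_n par xs n x ->
    v (xs n) * u x = u (xs n) * v x.
Proof.
move=> n n_ge1 x x_Gn.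
have [->|[y [m [y_child y_ne x_y]]]] := in_Gamma_nP Hlev Hxs_lev Hxs_adj n_ge1 x_Gn.
  exact: mulrC.
pose w t := v (xs n) * u t - u (xs n) * v t.
have Jw d : d <> xs 0%N -> Jac par children lam beta w d = z * w d.
  by move=> d_ne; rewrite Jac_lincomb Hu // Hv // /w; ring.
have y_avoid : avoids_x0 par (xs 0%N) y.
  move=> d k d_y d_x0; apply: y_ne.
  rewrite -d_y d_x0 (iter_par_xs0 Hlev Hxs_lev Hxs_adj) in y_child *.
  by have := f_equal lev y_child; rewrite Hlev !Hxs_lev => <-.
have wpy0 : w (par y) = 0 by rewrite /w y_child mulrC subrr.
exact/subr0_eq/(subtree_vanish Hlev Hch Hlam Hbeta Jw Hz y_avoid wpy0 x_y).
Qed.
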